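(* Let $m$ be a tour with core $K$. If $\theta_1\in\mathbb{S}^1$ and $z\in\partial K\cap D(\theta_1)$, then $z=m(\theta_1)$.
   Context: Write $\mathbb{S}^1=\mathbb{R}/2\pi\mathbb{Z}$, $u(\theta)=(\cos\theta,\sin\theta)$ and $u^\perp(\theta)=(-\sin\theta,\cos\theta)$. A ruled function $R:\mathbb{S}^1\to\mathbb{R}$ is one having a left limit $R_l(\theta)$ and a right limit $R_r(\theta)$ at every point. A tour is a continuous map $m:\mathbb{S}^1\to\mathbb{R}^2$ such that: - $m$ has left and right derivatives at every point; - there is a ruled function $R$ with $m'_l(\theta)=R_l(\theta)u(\theta)$ and $m'_r(\theta)=R_r(\theta)u(\theta)$. For each $\theta$, $D(\theta)=m(\theta)+\mathbb{R}u(\theta)$ is the line oriented by $u(\theta)$, and $D^+(\theta)=\{x:\langle x-m(\theta),u^\perp(\theta)\rangle\ge0\}$ is its closed left half-plane. The core of the tour is $K=\bigcap_{\theta}D^+(\theta)$. *)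

From Stdlib Require Import Reals.
From Coquelicot Require Import Coquelicot.
Open Scope R_scope.

(* Points of the plane R^2 are pairs of reals. Functions on S^1 = R/2piZ
   are represented as 2pi-periodic functions on R. *)
Definition pt := (R * R)%type.

Definition periodic2pi {A : Type} (f : R -> A) : Prop :=
  forall t, f (t + 2 * PI) = f t.

Definition u (t : R) : pt := (cos t, sin t).
Definition uperp (t : R) : pt := (- sin t, cos t).

Definition inner (x y : pt) : R := fst x * fst y + snd x * snd y.

Definition left_lim (f : R -> R) (t l : R) : Prop :=
  filterlim f (at_left t) (locally l).
Definition right_lim (f : R -> R) (t l : R) : Prop :=
  filterlim f (at_right t) (locally l).

Definition ruled (Rf : R -> R) : Prop :=
  periodic2pi Rf /\
  forall t, (exists l, left_lim Rf t l) /\ (exists r, right_lim Rf t r).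

Definition left_deriv (m : R -> pt) (t : R) (d : pt) : Prop :=
  filterlim (fun h => (fst (m (t + h)) - fst (m t)) / h) (at_left 0) (locally (fst d)) /\
  filterlim (fun h => (snd (m (t + h)) - snd (m t)) / h) (at_left 0) (locally (snd d)).
Definition right_deriv (m : R -> pt) (t : R) (d : pt) : Prop :=
  filterlim (fun h => (fst (m (t + h)) - fst (m t)) / h) (at_right 0) (locally (fst d)) /\
  filterlim (fun h => (snd (m (t + h)) - snd (m t)) / h) (at_right 0) (locally (snd d)).

Definition scal2 (a : R) (x : pt) : pt := (a * fst x, a * snd x).
Definition add2 (x y : pt) : pt := (fst x + fst y, snd x + snd y).

Definition tour (m : R -> pt) : Prop :=
  periodic2pi m /\
  (forall t, continuous (fun s => fst (m s)) t /\ continuous (fun s => snd (m s)) t) /\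
  exists Rf : R -> R, ruled Rf /\
    forall t, exists l r : R,
      left_lim Rf t l /\ right_lim Rf t r /\
      left_deriv m t (scal2 l (u t)) /\ right_deriv m t (scal2 r (u t)).

Definition Dline (m : R -> pt) (t : R) (z : pt) : Prop :=
  exists s : R, z = add2 (m t) (scal2 s (u t)).

Definition Dplus (m : R -> pt) (t : R) (x : pt) : Prop :=
  inner (add2 x (scal2 (-1) (m t))) (uperp t) >= 0.

Definition core (m : R -> pt) (x : pt) : Prop := forall t, Dplus m t x.

Definition dist2 (x y : pt) : R :=
  sqrt ((fst x - fst y) ^ 2 + (snd x - snd y) ^ 2).

Definition boundary (K : pt -> Prop) (z : pt) : Prop :=
  forall eps, eps > 0 ->
    (exists y, K y /\ dist2 z y < eps) /\ (exists y, ~ K y /\ dist2 z y < eps).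

(* For [z] in the core, the gap [g θ := <z - m θ, u⊥ θ>] is nonnegative for
   every [θ] (the core is closed, so it contains its boundary), and it vanishes
   at [θ1] when [z = m θ1 + s u θ1] lies on [D θ1].  Because [m'] is parallel to
   [u], both one-sided derivatives of [g] at [θ1] equal [-s]; at a minimum the
   right derivative is [>= 0] and the left one is [<= 0], hence [s = 0]. *)
From Stdlib Require Import Reals Lra.
From Coquelicot Require Import Coquelicot.
Open Scope R_scope.

Definition support_gap (m : R -> pt) (z : pt) (t : R) : R :=
  inner (add2 z (scal2 (-1) (m t))) (uperp t).

Lemma inner_uperp_le_dist2 (x y : pt) (t : R) :
  inner (add2 x (scal2 (-1) y)) (uperp t) <= dist2 x y.
Proof.
  unfold inner, add2, scal2, uperp, dist2; simpl.
  set (a := fst x - fst y); set (b := snd x - snd y).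
  replace (fst x + -1 * fst y) with a by (unfold a; ring).
  replace (snd x + -1 * snd y) with b by (unfold b; ring).
  pose proof (sin2_cos2 t) as Hsc; unfold Rsqr in Hsc.
  apply Rle_trans with (Rabs (a * - sin t + b * cos t)); [apply Rle_abs|].
  rewrite <- sqrt_Rsqr_abs; apply sqrt_le_1_alt; unfold Rsqr.
  (* Lagrange's identity with [sin² + cos² = 1] *)
  assert (Lagrange : a ^ 2 + b ^ 2 - (a * - sin t + b * cos t) * (a * - sin t + b * cos t)
                     = (a * cos t + b * sin t) ^ 2).
  { replace (a ^ 2 + b ^ 2) with ((a ^ 2 + b ^ 2) * (sin t * sin t + cos t * cos t))
      by (rewrite Hsc; ring).
    ring. }
  pose proof (pow2_ge_0 (a * cos t + b * sin t)); lra.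
Qed.

Lemma Dplus_closed (m : R -> pt) (t : R) (z : pt) :
  (forall eps, eps > 0 -> exists y, Dplus m t y /\ dist2 z y < eps) -> Dplus m t z.
Proof.
  intros Hnear; unfold Dplus.
  destruct (Rge_dec (inner (add2 z (scal2 (-1) (m t))) (uperp t)) 0) as [Hz|Hz]; [exact Hz|].
  destruct (Hnear (- inner (add2 z (scal2 (-1) (m t))) (uperp t))) as [y [Hy Hzy]]; [lra|].
  pose proof (inner_uperp_le_dist2 y z t) as Hlip.
  replace (dist2 y z) with (dist2 z y) in Hlip
    by (unfold dist2; f_equal; ring).
  unfold Dplus, inner, add2, scal2 in *; simpl in *; lra.
Qed.

Lemma boundary_core_in_core (m : R -> pt) (z : pt) : boundary (core m) z -> core m z.
Proof.
  intros Hb t; apply Dplus_closed; intros eps Heps.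
  destruct (Hb eps Heps) as [[y [Hy Hzy]] _]; exists y; auto.
Qed.

Lemma lim_right_div_nonneg (phi : R -> R) (a : R) :
  (forall h, 0 <= phi h) ->
  filterlim (fun h => phi h / h) (at_right 0) (locally a) -> 0 <= a.
Proof.
  intros Hphi Hlim.
  assert (Hpos : at_right 0 (fun h => 0 <= phi h / h)).
  { exists (mkposreal 1 Rlt_0_1); intros h _ Hh.
    apply Rdiv_le_0_compat; [apply Hphi | exact Hh]. }
  exact (filterlim_le (fun _ => 0) _ 0 a Hpos (filterlim_const 0) Hlim).
Qed.

Lemma lim_left_div_nonpos (phi : R -> R) (a : R) :
  (forall h, 0 <= phi h) ->
  filterlim (fun h => phi h / h) (at_left 0) (locally a) -> a <= 0.
Proof.
  intros Hphi Hlim.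
  assert (Hneg : at_left 0 (fun h => phi h / h <= 0)).
  { exists (mkposreal 1 Rlt_0_1); intros h _ Hh.
    unfold Rdiv; rewrite <- (Rmult_0_r (phi h)).
    apply Rmult_le_compat_l; [apply Hphi|].
    left; apply Rinv_lt_0_compat; exact Hh. }
  exact (filterlim_le _ (fun _ => 0) a 0 Hneg Hlim (filterlim_const 0)).
Qed.

Section LimitAlgebra.

Context {T : Type} (F : (T -> Prop) -> Prop) {FF : Filter F}.

Lemma filterlim_Rplus_fun (f g : T -> R) (a b : R) :
  filterlim f F (locally a) -> filterlim g F (locally b) ->
  filterlim (fun x => f x + g x) F (locally (a + b)).
Proof. intros Hf Hg; exact (filterlim_comp_2 f g Rplus Hf Hg (filterlim_plus a b)). Qed.

Lemma filterlim_Rmult_fun (f g : T -> R) (a b : R) :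
  filterlim f F (locally a) -> filterlim g F (locally b) ->
  filterlim (fun x => f x * g x) F (locally (a * b)).
Proof. intros Hf Hg; exact (filterlim_comp_2 f g Rmult Hf Hg (filterlim_mult a b)). Qed.

Lemma filterlim_Ropp_fun (f : T -> R) (a : R) :
  filterlim f F (locally a) -> filterlim (fun x => - f x) F (locally (- a)).
Proof. intros Hf; exact (filterlim_comp _ _ _ f Ropp F _ _ Hf (filterlim_opp a)). Qed.

End LimitAlgebra.

Lemma filterlim_shift_continuous (F : (R -> Prop) -> Prop) (f : R -> R) (t : R) :
  filter_le F (locally 0) -> continuous f t ->
  filterlim (fun h => f (t + h)) F (locally (f t)).
Proof.
  intros HF Hf; apply (filterlim_comp _ _ _ (fun h => t + h) f F (locally t)); [|exact Hf].
  apply (filterlim_filter_le_1 _ HF).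
  intros P [eps HP]; exists eps; intros h Hh; apply HP.
  change (Rabs (t + h - t) < eps); change (Rabs (h - 0) < eps) in Hh.
  replace (t + h - t) with (h - 0) by ring; exact Hh.
Qed.

(* The [-s sin h] term comes from [<u t, u⊥ (t + h)> = - sin h]. *)
Lemma support_gap_div_Dline (m : R -> pt) (t s h : R) : h <> 0 ->
  support_gap m (add2 (m t) (scal2 s (u t))) (t + h) / h =
  - ((fst (m (t + h)) - fst (m t)) / h * - sin (t + h)
     + (snd (m (t + h)) - snd (m t)) / h * cos (t + h)) - s * (sin h / h).
Proof.
  intros Hh; unfold support_gap, inner, add2, scal2, u, uperp; simpl.
  replace (sin h) with (sin (t + h - t)) by (f_equal; ring).
  rewrite sin_minus; field; exact Hh.
Qed.

Lemma support_gap_div_lim (F : (R -> Prop) -> Prop) {FF : Filter F}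
    (m : R -> pt) (t s c : R) :
  filter_le F (locally' 0) ->
  filterlim (fun h => (fst (m (t + h)) - fst (m t)) / h) F (locally (c * cos t)) ->
  filterlim (fun h => (snd (m (t + h)) - snd (m t)) / h) F (locally (c * sin t)) ->
  filterlim (fun h => support_gap m (add2 (m t) (scal2 s (u t))) (t + h) / h)
    F (locally (- s)).
Proof.
  intros HF Hx Hy.
  assert (HF0 : filter_le F (locally 0))
    by (eapply filter_le_trans; [exact HF | apply filter_le_within]).
  pose proof (filterlim_shift_continuous F cos t HF0 (continuous_cos t)) as Hcos.
  pose proof (filterlim_shift_continuous F sin t HF0 (continuous_sin t)) as Hsin.
  assert (Hsinc : filterlim (fun h => sin h / h) F (locally 1))
    by exact (filterlim_filter_le_1 _ HF is_lim_sinc_0).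
  assert (Hnz : F (fun h => h <> 0)) by (apply HF; exists (mkposreal 1 Rlt_0_1); auto).
  eapply filterlim_ext_loc.
  { apply (filter_imp _ _ (fun h Hh => eq_sym (support_gap_div_Dline m t s h Hh)) Hnz). }
  (* the derivative [c u t] is orthogonal to [u⊥ t] *)
  replace (- s) with (- (c * cos t * - sin t + c * sin t * cos t) + - (s * 1)) by ring.
  apply (filterlim_Rplus_fun F); apply (filterlim_Ropp_fun F).
  - apply (filterlim_Rplus_fun F); apply (filterlim_Rmult_fun F); auto.
    apply (filterlim_Ropp_fun F); exact Hsin.
  - apply (filterlim_Rmult_fun F); [apply filterlim_const | exact Hsinc].
Qed.

Lemma at_right_le_locally' : filter_le (at_right 0) (locally' 0).
Proof. intros P [d HP]; exists d; intros h Hh Hh0; apply HP; auto; lra. Qed.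

Lemma at_left_le_locally' : filter_le (at_left 0) (locally' 0).
Proof. intros P [d HP]; exists d; intros h Hh Hh0; apply HP; auto; lra. Qed.

Theorem mainTheorem3 (m : R -> pt) (theta1 : R) (z : pt) :
  tour m -> boundary (core m) z -> Dline m theta1 z -> z = m theta1.
Proof.
  intros [_ [_ [Rf [_ Hderiv]]]] Hb [s ->].
  assert (Hgap : forall h,
            0 <= support_gap m (add2 (m theta1) (scal2 s (u theta1))) (theta1 + h)).
  { intros h; apply Rge_le, (boundary_core_in_core m _ Hb). }
  destruct (Hderiv theta1) as [l [r [_ [_ [[Hlx Hly] [Hrx Hry]]]]]].
  pose proof (lim_right_div_nonneg _ _ Hgap
    (support_gap_div_lim _ m theta1 s r at_right_le_locally' Hrx Hry)) as Hright.
  pose proof (lim_left_div_nonpos _ _ Hgap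
    (support_gap_div_lim _ m theta1 s l at_left_le_locally' Hlx Hly)) as Hleft.
  replace s with 0 by lra.
  unfold add2, scal2; destruct (m theta1); simpl; f_equal; ring.
Qed.
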